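(* Let $G$ be a bipartite super edge-magic simple graph with stable sets $X$ and $Y$, and suppose $G\cong H_1\oplus H_2$ is a decomposition of $G$. Then $\lim_{n\to\infty}|\sigma_{S_{2n}(G;H_1,H_2)}|=\infty$.
   Context: For a $(p,q)$-graph $G$ ($p$ vertices, $q$ edges), an edge-magic labeling is a bijection $f:V(G)\cup E(G)\to[1,p+q]$ such that $f(x)+f(xy)+f(y)$ equals a constant (the valence) for every edge $xy$; it is super edge-magic if moreover $f(V(G))=[1,p]$. For a graph $H$, $\sigma_H$ is the set of integers that are valences of super edge-magic labelings of $H$. A decomposition $G\cong H_1\oplus H_2$ means $H_1,H_2$ are subgraphs of $G$ whose edge sets partition $E(G)$. Writing $X=\{x_i\}_{i=1}^s$, $Y=\{y_j\}_{j=1}^t$, $S_{2n}(G;H_1,H_2)$ is the graph with vertex set $X\cup Y\cup\bigcup_{k=1}^n X_k\cup\bigcup_{k=1}^n Y_k$, where $X_k=\{x_i^k\}_{i=1}^s$, $Y_k=\{y_j^k\}_{j=1}^t$ are new vertices, and edge set $E(G)\cup\{x_iy_j^k: x_iy_j\in E(H_1),\,k\in[1,n]\}\cup\{x_i^ky_j: x_iy_j\in E(H_2),\,k\in[1,n]\}$. *)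

From mathcomp Require Import all_boot.
Set Implicit Arguments. Unset Strict Implicit. Unset Printing Implicit Defensive.

(* A simple graph on a finite vertex type V is given by a (symmetric,
   irreflexive) adjacency relation adj.  Its edges are the 2-sets {x,y}
   with adj x y. *)
Definition is_edge (V : finType) (adj : rel V) (e : {set V}) : bool :=
  [exists x, exists y, adj x y && (e == [set x; y])].

Definition edge_type (V : finType) (adj : rel V) :=
  {e : {set V} | is_edge adj e}.

Definition nverts (V : finType) (adj : rel V) : nat := #|V|.
Definition nedges (V : finType) (adj : rel V) : nat :=
  #|[pred e : {set V} | is_edge adj e]|.

Definition sem_valence (V : finType) (adj : rel V) (k : nat) : Prop :=
  exists f : V + edge_type adj -> nat,
    [/\ injective f,
        (forall i, (exists z, f z = i) <-> (1 <= i <= nverts adj + nedges adj)),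
        (forall i, (exists v, f (inl v) = i) <-> (1 <= i <= nverts adj)) &
        (forall (e : edge_type adj) (x y : V), adj x y -> val e = [set x; y] ->
            f (inl x) + f (inr e) + f (inl y) = k)].

Definition sigma (V : finType) (adj : rel V) : nat -> Prop := sem_valence adj.

Definition super_edge_magic (V : finType) (adj : rel V) : Prop :=
  exists k, sem_valence adj k.

(* Bipartite graph G with stable sets X = {x_i}_{i<s}, Y = {y_j}_{j<t};
   E i j means x_i y_j is an edge. Vertices: inl i = x_i, inr j = y_j. *)
Definition bip_dir (s t : nat) (E : 'I_s -> 'I_t -> bool)
  (u v : 'I_s + 'I_t) : bool :=
  match u, v with inl i, inr j => E i j | _, _ => false end.

Definition bip_adj (s t : nat) (E : 'I_s -> 'I_t -> bool) : rel ('I_s + 'I_t) :=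
  fun u v => bip_dir E u v || bip_dir E v u.

(* Vertices of S_{2n}(G;H1,H2):
   inl (inl i) = x_i, inl (inr j) = y_j,
   inr (inl (k,i)) = x_i^k, inr (inr (k,j)) = y_j^k  (k : 'I_n). *)
Definition S2n_vert (s t n : nat) : finType :=
  (('I_s + 'I_t) + (('I_n * 'I_s) + ('I_n * 'I_t)))%type.

Definition S2n_dir (s t n : nat) (E E1 E2 : 'I_s -> 'I_t -> bool)
  (u v : S2n_vert s t n) : bool :=
  match u, v with
  | inl (inl i), inl (inr j) => E i j                 (* x_i y_j,   E(G)  *)
  | inl (inl i), inr (inr (_, j)) => E1 i j          (* x_i y_j^k, E(H1) *)
  | inr (inl (_, i)), inl (inr j) => E2 i j          (* x_i^k y_j, E(H2) *)
  | _, _ => false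
  end.

Definition S2n_adj (s t n : nat) (E E1 E2 : 'I_s -> 'I_t -> bool)
  : rel (S2n_vert s t n) :=
  fun u v => S2n_dir E E1 E2 u v || S2n_dir E E1 E2 v u.

Arguments S2n_adj {s t} n E E1 E2.

From mathcomp Require Import all_boot zify.
Set Implicit Arguments. Unset Strict Implicit. Unset Printing Implicit Defensive.

(* A super edge-magic labeling of a graph with p vertices and q edges is
   determined by its vertex labels: these form a bijection onto [1, p] whose
   edge sums are q distinct consecutive integers T-q+1, ..., T, and the edges
   then take the remaining labels in decreasing order of their sums, giving
   valence p + 1 + T.  Write S_2n as n+1 layers over the vertices of G (G
   itself and its n copies).  Every edge of S_2n joins a vertex of G to a
   vertex of one layer c, over an edge x y of G, and each edge of G lies over
   exactly one edge per layer.  Choose a bijection o from the layers onto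
   [0, n] putting G in slot a, and label the vertex over v in layer c by
   (n+1) g(v) - o(c).  The edge sums become (n+1)(g x + g y) - a - o(c): these
   are (n+1)q distinct consecutive integers ending at (n+1)T - a, so each of
   the n+1 choices of a yields its own valence. *)


Lemma sum_set2 (V : finType) (h : V -> nat) (x y : V) : x != y ->
  \sum_(v in [set x; y]) h v = h x + h y.
Proof. by move=> nxy; rewrite big_setU1 /= ?big_set1 // in_set1. Qed.

Lemma onto_of_injective_bounded (T : finType) (h : T -> nat) (b : nat) :
  injective h -> (forall x, b <= h x < b + #|T|) ->
  forall i, b <= i < b + #|T| -> exists x, h x = i.
Proof.
move=> hinj hb i hi.
have uniq_img : uniq (map h (enum T)) by rewrite map_inj_uniq ?enum_uniq.
have img_sub : {subset map h (enum T) <= iota b #|T|}.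
  by move=> _ /mapP [x _ ->]; rewrite mem_iota.
have := uniq_min_size uniq_img img_sub.
rewrite size_map -cardE size_iota leqnn => /(_ isT) [_ /(_ i)].
by rewrite mem_iota hi => /mapP [x _ ->]; exists x.
Qed.

Lemma card_of_bijective_iota (T : finType) (F : T -> nat) (Q : nat) :
  injective F -> (forall x, F x < Q) -> (forall r, r < Q -> exists x, F x = r) ->
  #|T| = Q.
Proof.
move=> Finj FQ Fonto; rewrite cardE -(size_map F) -[Q in RHS](size_iota 0).
have uniq_img : uniq (map F (enum T)) by rewrite map_inj_uniq ?enum_uniq.
apply/eqP; rewrite eqn_leq !uniq_leq_size ?iota_uniq //.
- by move=> r; rewrite mem_iota => /Fonto [x <-]; rewrite map_f ?mem_enum.
- by move=> _ /mapP [x _ ->]; rewrite mem_iota /= FQ.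
Qed.

Section EdgeSums.
Variables (V : finType) (adj : rel V).

Lemma sem_valence_of_edge_sums (h : V -> nat) (D Q : nat) :
  irreflexive adj -> injective h -> (forall v, 0 < h v <= #|V|) ->
  (forall e : edge_type adj, exists2 r, r < Q & \sum_(v in val e) h v + r = D) ->
  (forall r, r < Q -> exists e : edge_type adj, \sum_(v in val e) h v + r = D) ->
  injective (fun e : edge_type adj => \sum_(v in val e) h v) ->
  sem_valence adj (#|V| + 1 + D).
Proof.
move=> irr hinj hb hdef hcover hsum_inj.
set p := #|V| in hb *.
pose F (e : edge_type adj) := D - \sum_(v in val e) h v.
have hF e : F e < Q /\ \sum_(v in val e) h v + F e = D.
  by have [r ltrQ eD] := hdef e; rewrite /F; lia.
have Finj : injective F.
  move=> e1 e2 eqF; apply: hsum_inj.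
  by have [_ sum1] := hF e1; have [_ sum2] := hF e2; lia.
have Fonto r : r < Q -> exists e, F e = r.
  by move=> /hcover [e he]; exists e; have [_] := hF e; lia.
have nedgesQ : nedges adj = Q.
  rewrite /nedges -(card_sig (is_edge adj)).
  by apply: card_of_bijective_iota Finj _ Fonto => e; have [] := hF e.
pose f z := match z with inl v => h v | inr e => p + 1 + F e end.
have h_onto i : 0 < i <= p -> exists v, h v = i.
  by apply: onto_of_injective_bounded.
exists f; split; rewrite /nverts -/p ?nedgesQ.
- move=> [v1|e1] [v2|e2] /= eqf.
  + by rewrite (hinj _ _ eqf).
  + by have := hb v1; lia.
  + by have := hb v2; lia.
  + by rewrite (Finj e1 e2) //; lia.
- move=> i; split=> [[[v|e] <-] /=|/andP [i_gt0 i_le]].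
  + by have := hb v; lia.
  + by have [] := hF e; lia.
  + have [i_le_p|p_lt_i] := leqP i p.
      by have [v <-] := h_onto i ltac:(lia); exists (inl v).
    have [e Fe] := Fonto (i - p - 1) ltac:(lia).
    by exists (inr e) => /=; lia.
- by move=> i; split=> [[v <-]|/h_onto [v <-]]; [exact: hb | exists v].
- move=> e x y adjxy ve /=.
  have nxy : x != y by apply: contraTneq adjxy => ->; rewrite irr.
  by have [_] := hF e; rewrite ve sum_set2 //; lia.
Qed.

Lemma edge_sums_of_sem_valence (k : nat) : sem_valence adj k ->
  exists (h : V -> nat) (F : edge_type adj -> nat),
  [/\ injective h, forall v, 0 < h v <= #|V|, injective F,
      forall r, (exists e, F e = r) <-> r < nedges adj &
      forall e x y, adj x y -> val e = [set x; y] -> h x + h y + F e = k - #|V|.+1].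
Proof.
case=> f [finj f_img fv_img fval]; rewrite /nverts in f_img fv_img.
set p := #|V| in f_img fv_img *; set q := nedges adj in f_img *.
have hb v : 0 < f (inl v) <= p by apply/fv_img; exists v.
have edge_lab e : p < f (inr e) <= p + q.
  have lab_e : 0 < f (inr e) <= p + q by apply/f_img; exists (inr e).
  suff : ~ f (inr e) <= p by lia.
  move=> le_p; have [v /finj //] : exists v, f (inl v) = f (inr e).
  by apply/fv_img; lia.
exists (fun v => f (inl v)), (fun e => f (inr e) - p.+1); split.
- by move=> v1 v2 /finj [].
- exact: hb.
- move=> e1 e2 eqF; have /finj [//] : f (inr e1) = f (inr e2).
  by have := edge_lab e1; have := edge_lab e2; lia.
- move=> r; split=> [[e <-]|lt_r]; first by have := edge_lab e; lia.
  have [[v|e] fz] : exists z, f z = p.+1 + r by apply/f_img; lia.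
  + by have := hb v; lia.
  + by exists e; lia.
- move=> e x y adjxy ve.
  by have := fval e x y adjxy ve; have := edge_lab e; lia.
Qed.
End EdgeSums.

Definition consecutive_edge_sums (s t : nat) (E : 'I_s -> 'I_t -> bool)
    (g : 'I_s + 'I_t -> nat) (T q : nat) : Prop :=
  [/\ forall i j, E i j -> exists2 r, r < q & g (inl i) + g (inr j) + r = T,
      forall r, r < q -> exists i j, E i j /\ g (inl i) + g (inr j) + r = T &
      forall i1 j1 i2 j2, E i1 j1 -> E i2 j2 ->
        g (inl i1) + g (inr j1) = g (inl i2) + g (inr j2) -> i1 = i2 /\ j1 = j2].

Lemma set2_inl_inr_inj (A B : finType) (a1 a2 : A) (b1 b2 : B) :
  [set inl a1; inr b1] = [set inl a2; inr b2] :> {set A + B} -> a1 = a2 /\ b1 = b2.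
Proof.
move=> eq12; split.
- by have := set21 (inl a1 : A + B) (inr b1); rewrite eq12 => /set2P [[]|].
- by have := set22 (inl a1 : A + B) (inr b1); rewrite eq12 => /set2P [|[]].
Qed.

Section Bipartite.
Variables (s t : nat) (E : 'I_s -> 'I_t -> bool).

Lemma bip_adj_edge i j : E i j -> bip_adj E (inl i) (inr j).
Proof. by rewrite /bip_adj /= => ->. Qed.

Lemma bip_is_edge i j : E i j -> is_edge (bip_adj E) [set inl i; inr j].
Proof.
move=> Eij; apply/existsP; exists (inl i); apply/existsP; exists (inr j).
by rewrite bip_adj_edge // eqxx.
Qed.

Lemma bip_edgeP (e : edge_type (bip_adj E)) :
  exists i j, E i j /\ val e = [set inl i; inr j].
Proof.
have /existsP [x /existsP [y /andP [adjxy /eqP ->]]] := valP e.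
case: x y adjxy => [i|j] [i'|j'] //=; rewrite /bip_adj /= ?orbF => Eij.
- by exists i, j'.
- by exists i', j; rewrite setUC.
Qed.

Lemma bip_consecutive_edge_sums : super_edge_magic (bip_adj E) ->
  exists g T q, [/\ injective g, forall v, 0 < g v <= s + t, 0 < T &
                    consecutive_edge_sums E g T q].
Proof.
case=> k /edge_sums_of_sem_valence [g [F [ginj gb Finj F_img gsum]]].
rewrite card_sum !card_ord in gb gsum.
(* Restated at type ['I_s + 'I_t] so that [lia] sees the same atoms
   [g (inl i)] as in the goals below. *)
have {}gb (v : 'I_s + 'I_t) : 0 < g v <= s + t := gb v.
pose edge i j (Eij : E i j) : edge_type (bip_adj E) :=
  exist _ [set inl i; inr j] (bip_is_edge Eij).
have edge_sum i j (Eij : E i j) := gsum (edge i j Eij) _ _ (bip_adj_edge Eij) erefl.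
(* Without edges the sum [T] is unconstrained, so we may force [0 < T]. *)
exists g, (maxn 1 (k - (s + t).+1)), (nedges (bip_adj E)); split=> //; first lia.
split.
- move=> i j Eij; exists (F (edge i j Eij)); first by apply/F_img; exists (edge i j Eij).
  by have := edge_sum i j Eij; have := gb (inl i); lia.
- move=> r /F_img [e <-]; have [i [j [Eij ve]]] := bip_edgeP e.
  exists i, j; split=> //.
  by have := gsum e _ _ (bip_adj_edge Eij) ve; have := gb (inl i); lia.
- move=> i1 j1 i2 j2 Eij1 Eij2 eq_sums; apply: set2_inl_inr_inj.
  apply: (congr1 val (_ : edge i1 j1 Eij1 = edge i2 j2 Eij2)); apply: Finj.
  by have := edge_sum i1 j1 Eij1; have := edge_sum i2 j2 Eij2; lia.
Qed.

End Bipartite.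

Lemma mulSn_sub_offset_inj (n b x1 x2 o1 o2 : nat) :
  b <= o1 <= b + n -> b <= o2 <= b + n ->
  b + n < n.+1 * x1 -> b + n < n.+1 * x2 ->
  n.+1 * x1 - o1 = n.+1 * x2 - o2 -> x1 = x2 /\ o1 = o2.
Proof.
move=> o1b o2b x1b x2b eq12.
have [lt12|lt21|eq_x] := ltngtP x1 x2; last by subst; lia.
- have : n.+1 * x1.+1 <= n.+1 * x2 by rewrite leq_mul2l.
  by rewrite mulnS; lia.
- have : n.+1 * x2.+1 <= n.+1 * x1 by rewrite leq_mul2l.
  by rewrite mulnS; lia.
Qed.

Section Blowup.
Variables (s t n : nat).
Implicit Types (w : S2n_vert s t n) (c : option 'I_n).

Definition S2n_base w : 'I_s + 'I_t :=
  match w with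
  | inl v => v
  | inr (inl (_, i)) => inl i
  | inr (inr (_, j)) => inr j
  end.

Definition S2n_copy w : option 'I_n :=
  match w with
  | inl _ => None
  | inr (inl (k, _)) | inr (inr (k, _)) => Some k
  end.

Lemma S2n_base_copy_inj w1 w2 :
  S2n_base w1 = S2n_base w2 -> S2n_copy w1 = S2n_copy w2 -> w1 = w2.
Proof.
case: w1 => [v1|[[k1 i1]|[k1 j1]]]; case: w2 => [v2|[[k2 i2]|[k2 j2]]] //=.
- by move=> ->.
- by move=> [->] [->].
- by move=> [->] [->].
Qed.

Definition copy_offset (a : nat) c : nat :=
  if c is Some k then (if k < a then val k else k.+1) else a.

Lemma copy_offset_le a c : a <= n -> copy_offset a c <= n.
Proof. by case: c => [k|] //= an; have := ltn_ord k; case: ifP; lia. Qed.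

Lemma copy_offset_inj a : a <= n -> injective (copy_offset a).
Proof.
move=> an [k1|] [k2|] //=; try by case: ifP; lia.
by move=> eq12; congr Some; apply: ord_inj; move: eq12; case: ifP; case: ifP; lia.
Qed.

Lemma copy_offset_onto a o : a <= n -> o <= n -> exists c, copy_offset a c = o.
Proof.
move=> an on; apply: (onto_of_injective_bounded (b := 0) (copy_offset_inj an)).
- by move=> c; rewrite card_option card_ord add0n ltnS copy_offset_le.
- by rewrite card_option card_ord add0n ltnS.
Qed.

Lemma card_S2n_vert : #|{: S2n_vert s t n}| = n.+1 * (s + t).
Proof. by rewrite !card_sum !card_prod !card_ord; lia. Qed.

Section Edges.
Variables (E E1 E2 : 'I_s -> 'I_t -> bool).
Hypotheses (hpart : forall i j, E i j = E1 i j || E2 i j)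
           (hdisj : forall i j, ~~ (E1 i j && E2 i j)).

Definition S2n_edge i j c : {set S2n_vert s t n} :=
  match c with
  | None => [set inl (inl i); inl (inr j)]
  | Some k => if E1 i j then [set inl (inl i); inr (inr (k, j))]
              else [set inr (inl (k, i)); inl (inr j)]
  end.

Lemma S2n_edge_is_edge i j c : E i j -> is_edge (S2n_adj n E E1 E2) (S2n_edge i j c).
Proof.
move=> Eij; apply/existsP; case: c => [k|] /=; last first.
  exists (inl (inl i)); apply/existsP; exists (inl (inr j)).
  by rewrite /S2n_adj /= Eij eqxx.
case E1ij: (E1 i j).
  exists (inl (inl i)); apply/existsP; exists (inr (inr (k, j))).
  by rewrite /S2n_adj /= E1ij eqxx.
have E2ij : E2 i j by move: Eij; rewrite hpart E1ij.
exists (inr (inl (k, i))); apply/existsP; exists (inl (inr j)).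
by rewrite /S2n_adj /= E2ij eqxx.
Qed.

Lemma S2n_edgeP (e : edge_type (S2n_adj n E E1 E2)) :
  exists i j c, E i j /\ val e = S2n_edge i j c.
Proof.
have /existsP [x /existsP [y /andP [adjxy /eqP ->]]] := valP e.
have E1E i j : E1 i j -> E i j by rewrite hpart => ->.
have E2E i j : E2 i j -> E i j by rewrite hpart orbC => ->.
have E2_notE1 i j : E2 i j -> E1 i j = false.
  by move=> E2ij; apply/negbTE; move: (hdisj i j); rewrite E2ij andbT.
move: adjxy; rewrite /S2n_adj.
case: x => [[i|j]|[[k i]|[k j]]]; case: y => [[i'|j']|[[k' i']|[k' j']]] //=;
  rewrite ?orbF // => Eij.
- by exists i, j', None.
- by exists i, j', (Some k'); rewrite /= Eij E1E.
- by exists i', j, None; rewrite /= setUC.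
- by exists i', j, (Some k'); rewrite /= E2_notE1 ?E2E // setUC.
- by exists i, j', (Some k); rewrite /= E2_notE1 ?E2E.
- by exists i', j, (Some k); rewrite /= Eij E1E // setUC.
Qed.

End Edges.

Section Labeling.
Variables (g : 'I_s + 'I_t -> nat) (a : nat).
Hypotheses (ginj : injective g) (gb : forall v, 0 < g v <= s + t) (an : a <= n).

Definition blowup_label w : nat := n.+1 * g (S2n_base w) - copy_offset a (S2n_copy w).

Lemma lt_mulSn_label v : n < n.+1 * g v.
Proof.
by have /andP [g_gt0 _] := gb v; rewrite mulSn; have := leq_pmulr n g_gt0; lia.
Qed.

Lemma blowup_label_inj : injective blowup_label.
Proof.
move=> w1 w2 eq_lab.
have off_le w : 0 <= copy_offset a (S2n_copy w) <= 0 + n by rewrite copy_offset_le.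
have [/ginj eq_base eq_off] :=
  mulSn_sub_offset_inj (off_le w1) (off_le w2)
    (lt_mulSn_label _) (lt_mulSn_label _) eq_lab.
by apply: S2n_base_copy_inj eq_base (copy_offset_inj an eq_off).
Qed.

Lemma blowup_label_bounded w : 0 < blowup_label w <= #|{: S2n_vert s t n}|.
Proof.
rewrite card_S2n_vert /blowup_label.
have /andP [_ g_le] := gb (S2n_base w).
have : n.+1 * g (S2n_base w) <= n.+1 * (s + t) by rewrite leq_mul2l g_le orbT.
by have := copy_offset_le (S2n_copy w) an; have := lt_mulSn_label (S2n_base w); lia.
Qed.

Lemma sum_S2n_edge E1 i j c :
  \sum_(v in S2n_edge E1 i j c) blowup_label v + (a + copy_offset a c)
  = n.+1 * (g (inl i) + g (inr j)).
Proof.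
have := lt_mulSn_label (inl i); have := lt_mulSn_label (inr j).
have := copy_offset_le c an; rewrite mulnDr.
by case: c => [k|] /=; [case: (E1 i j)|]; rewrite sum_set2 // /blowup_label /=; lia.
Qed.

Variables (E E1 E2 : 'I_s -> 'I_t -> bool) (T q : nat).
Hypotheses (hpart : forall i j, E i j = E1 i j || E2 i j)
           (hdisj : forall i j, ~~ (E1 i j && E2 i j))
           (gsums : consecutive_edge_sums E g T q).

Lemma S2n_edge_deficiency (e : edge_type (S2n_adj n E E1 E2)) :
  exists2 r, r < n.+1 * q & \sum_(v in val e) blowup_label v + r = n.+1 * T - a.
Proof.
have [i [j [c [Eij ->]]]] := S2n_edgeP hpart hdisj e.
have [gdef _ _] := gsums; have [r r_lt eq_r] := gdef i j Eij.
exists (n.+1 * r + copy_offset a c).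
  have : n.+1 * r.+1 <= n.+1 * q by rewrite leq_mul2l r_lt orbT.
  by have := copy_offset_le c an; rewrite mulnS; lia.
have : n.+1 * T = n.+1 * (g (inl i) + g (inr j)) + n.+1 * r by rewrite -eq_r mulnDr.
by have := sum_S2n_edge E1 i j c; lia.
Qed.

Lemma S2n_edge_deficiency_onto r : r < n.+1 * q ->
  exists e : edge_type (S2n_adj n E E1 E2),
    \sum_(v in val e) blowup_label v + r = n.+1 * T - a.
Proof.
move=> r_lt; have [_ gcover _] := gsums.
have [c off_c] := copy_offset_onto an (ltnSE (ltn_pmod r (ltn0Sn n))).
have lt_div : r %/ n.+1 < q by rewrite ltn_divLR // mulnC.
have [i [j [Eij <-]]] := gcover _ lt_div.
exists (exist _ (S2n_edge E1 i j c) (S2n_edge_is_edge hpart c Eij)); rewrite [val _]/=.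
have := sum_S2n_edge E1 i j c; rewrite off_c {2}(divn_eq r n.+1) mulnDr.
by move: (r %/ n.+1) (r %% n.+1) => d m; lia.
Qed.

Lemma S2n_edge_sum_inj :
  injective (fun e : edge_type (S2n_adj n E E1 E2) => \sum_(v in val e) blowup_label v).
Proof.
move=> e1 e2 eq_sum; have [_ _ gsep] := gsums.
have [i1 [j1 [c1 [Eij1 ve1]]]] := S2n_edgeP hpart hdisj e1.
have [i2 [j2 [c2 [Eij2 ve2]]]] := S2n_edgeP hpart hdisj e2.
have sum1 := sum_S2n_edge E1 i1 j1 c1; have sum2 := sum_S2n_edge E1 i2 j2 c2.
rewrite ve1 ve2 in eq_sum.
have lt_edge_label i j : a + n < n.+1 * (g (inl i) + g (inr j)).
  by have := lt_mulSn_label (inl i); have := lt_mulSn_label (inr j); rewrite mulnDr; lia.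
have off_le c : a <= a + copy_offset a c <= a + n.
  by rewrite leq_addr leq_add2l copy_offset_le.
have eq_labels : n.+1 * (g (inl i1) + g (inr j1)) - (a + copy_offset a c1)
                 = n.+1 * (g (inl i2) + g (inr j2)) - (a + copy_offset a c2) by lia.
have [/(gsep _ _ _ _ Eij1 Eij2) [eq_i eq_j] /addnI /(copy_offset_inj an) eq_c] :=
  mulSn_sub_offset_inj (off_le c1) (off_le c2) (lt_edge_label _ _) (lt_edge_label _ _)
    eq_labels.
by apply: val_inj; rewrite ve1 ve2 eq_i eq_j eq_c.
Qed.

Lemma S2n_sem_valence :
  sem_valence (S2n_adj n E E1 E2) (#|{: S2n_vert s t n}| + 1 + (n.+1 * T - a)).
Proof.
apply: sem_valence_of_edge_sums blowup_label_inj blowup_label_bounded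
  S2n_edge_deficiency S2n_edge_deficiency_onto S2n_edge_sum_inj.
by case=> [[i|j]|[[k i]|[k j]]].
Qed.

End Labeling.
End Blowup.

Unset Implicit Arguments.
Theorem mainTheorem12 (s t : nat) (E E1 E2 : 'I_s -> 'I_t -> bool)
  (hpart : forall i j, E i j = E1 i j || E2 i j)
  (hdisj : forall i j, ~~ (E1 i j && E2 i j))
  (hsem : super_edge_magic (bip_adj E)) :
  forall M : nat, exists N : nat, forall n : nat, N <= n ->
    exists ks : seq nat, [/\ uniq ks, M <= size ks &
      forall k, k \in ks -> sigma (S2n_adj n E E1 E2) k].
Proof.
move=> M; have [g [T [q [ginj gb T_gt0 gsums]]]] := bip_consecutive_edge_sums hsem.
exists M => n le_Mn.
exists [seq #|{: S2n_vert s t n}| + 1 + (n.+1 * T - a) | a <- iota 0 n.+1]; split.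
- rewrite map_inj_in_uniq ?iota_uniq // => a1 a2; rewrite !mem_iota.
  by have := leq_pmulr n.+1 T_gt0; lia.
- by rewrite size_map size_iota; lia.
- move=> k /mapP [a]; rewrite mem_iota => a_lt ->.
  by apply: (S2n_sem_valence ginj gb _ hpart hdisj gsums); lia.
Qed.
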